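(* Consider the principal–agent model described in the context. For every $a>0$, \[ \sup_{x\in(L(a),\bar x]}\frac{f_a(x\mid a)}{f(x\mid a)}>0. \]
   Context: Model. Effort $a\ge0$; the outcome $X(a)$ is a continuous random variable with support $[L(a),\bar x]$, where $\bar x>0$ is fixed (possibly $+\infty$) and $L:[0,\infty)\to[0,\bar x)$ is nondecreasing on $[0,\infty)$ and continuously differentiable on $(0,\infty)$. $X(a)$ has density $f(x\mid a)$ and cdf $F(x\mid a)$; for each fixed $x\in(L(a),\bar x]$, $f(x\mid a)$ and $F(x\mid a)$ are differentiable in $a>0$ with derivatives $f_a,F_a$, both continuous on $(L(a),\bar x]\times(0,\infty)$, and $F_a<0$ there. Standing assumption (used here): for any nonnegative function $s$ with $\int_{L(a)}^{\bar x}s(x)f(x\mid a)\,dx<\infty$, $\lim_{h\uparrow0}\int_{L(a)}^{\bar x}\frac{f(x\mid a+h)-f(x\mid a)}{h}s(x)\,dx=\int_{L(a)}^{\bar x}\lim_{h\uparrow0}\frac{f(x\mid a+h)-f(x\mid a)}{h}s(x)\,dx$. (The paper's further standing assumptions: $\mathbb{E}[X(a)\mid a]$ is finite and continuous in $a$, $\mathbb{E}[X(a)\mid a]-c(a)\to-\infty$ as $a\to\infty$ for the effort cost $c$, and $a\mapsto\sup_{x\in(L(a),\bar x]}f_a/f$ is continuous on $(0,\infty)$.) *)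

From HB Require Import structures.
From mathcomp Require Import all_boot all_order all_algebra.
From mathcomp Require Import all_classical all_reals all_analysis.
Set Implicit Arguments. Unset Strict Implicit. Unset Printing Implicit Defensive.
Import Order.TTheory GRing.Theory Num.Theory.
Import numFieldNormedType.Exports.
Local Open Scope classical_set_scope.
Local Open Scope ring_scope.

Definition supp_int (R : realType) (xbar : \bar R) (L : R -> R) (a : R) : set R :=
  [set x : R | L a < x /\ (x%:E <= xbar)%E].

(* Standing assumptions of the principal-agent model.
   f x a = f(x|a), F x a = F(x|a), fa x a = f_a(x|a), Fa x a = F_a(x|a). *)
Definition pa_model (R : realType) (xbar : \bar R) (L : R -> R)
    (f F fa Fa : R -> R -> R) : Prop :=
  (0 < xbar)%E /\
  (forall a : R, 0 <= a -> 0 <= L a /\ ((L a)%:E < xbar)%E) /\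
  (forall a b : R, 0 <= a -> a <= b -> L a <= L b) /\
  (forall a : R, 0 < a -> derivable L a 1) /\
  (forall a : R, 0 < a -> (derive1 L t @[t --> a] --> derive1 L a)) /\
  (forall a : R, 0 <= a -> measurable_fun setT (fun x => f x a)) /\
  (forall a x : R, 0 <= a -> 0 <= f x a) /\
  (forall a x : R, 0 <= a -> ~ (L a <= x /\ (x%:E <= xbar)%E) -> f x a = 0) /\
  (forall a x : R, 0 <= a -> x \in supp_int xbar L a -> 0 < f x a) /\
  (forall a : R, 0 <= a ->
     (\int[@lebesgue_measure R]_(x in setT) (f x a)%:E = 1)%E) /\
  (forall a x : R, 0 <= a ->
     (F x a)%:E = (\int[@lebesgue_measure R]_(t in `]-oo, x]) (f t a)%:E)%E) /\
  (forall a x : R, 0 < a -> x \in supp_int xbar L a ->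
     is_derive a 1 (f x) (fa x a) /\ is_derive a 1 (F x) (Fa x a)) /\
  (let S := [set p : R * R | 0 < p.2 /\ p.1 \in supp_int xbar L p.2] in
   {within S, continuous (fun p : R * R => fa p.1 p.2)} /\
   {within S, continuous (fun p : R * R => Fa p.1 p.2)}) /\
  (forall a x : R, 0 < a -> x \in supp_int xbar L a -> Fa x a < 0) /\
  (* interchange of limit and integral (left derivative) *)
  (forall a : R, 0 < a -> forall s : R -> R,
     (forall x, 0 <= s x) ->
     measurable_fun (supp_int xbar L a) s ->
     (\int[@lebesgue_measure R]_(x in supp_int xbar L a) (s x * f x a)%:E < +oo)%E ->
     (fun h : R => (\int[@lebesgue_measure R]_(x in supp_int xbar L a)
                 (((f x (a + h) - f x a) / h) * s x)%:E)%E)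
       @ 0^'- --> (\int[@lebesgue_measure R]_(x in supp_int xbar L a) (fa x a * s x)%:E)%E).

From HB Require Import structures.
From mathcomp Require Import all_boot all_order all_algebra.
From mathcomp Require Import all_classical all_reals all_analysis.
From mathcomp Require Import ring.
Set Implicit Arguments. Unset Strict Implicit. Unset Printing Implicit Defensive.
Import Order.TTheory GRing.Theory Num.Theory.
Import numFieldNormedType.Exports.
Local Open Scope classical_set_scope.
Local Open Scope ring_scope.

(* If f_a/f were <= 0 on the support (L(a), xbar], then so would be f_a.  Test
   the interchange of limit and integral on s = 1_(x, +oo) for some x in the
   support: the difference quotients of the integral of f(.|a) s are
   (F(x|a) - F(x|a+h))/h, whose left limit -F_a(x|a) is > 0, whereas the
   integral of f_a(.|a) s would be <= 0. *)

Section measure_integral.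
Context d (T : measurableType d) (R : realType) (mu : {measure set T -> \bar R}).

Lemma integral_mulr_indic (A B : set T) (k : T -> R) :
  (forall y, B y -> ~ A y -> k y = 0) ->
  (\int[mu]_(y in A) (k y * \1_B y)%:E = \int[mu]_(y in B) (k y)%:E)%E.
Proof.
move=> k0; rewrite integral_mkcond [RHS]integral_mkcond.
apply: eq_integral => y _; rewrite !patchE indicE.
case: (boolP (y \in A)) => yA; case: (boolP (y \in B)) => yB.
- by rewrite mulr1.
- by rewrite mulr0.
- by rewrite k0 // => [|/mem_set Ay]; [exact: set_mem | rewrite Ay in yA].
- by [].
Qed.

Lemma integral_le0 (D : set T) (k : T -> \bar R) :
  (forall y, D y -> (k y <= 0)%E) -> (\int[mu]_(y in D) k y <= 0)%E.
Proof.
move=> k_le0; have Nk_ge0 y : D y -> (0 <= - k y)%E.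
  by rewrite oppe_ge0; exact: k_le0.
under eq_integral => y _ do rewrite -[k y]oppeK.
by rewrite integral_ge0N // oppe_le0 integral_ge0.
Qed.

End measure_integral.

Section density.
Variable R : realType.
Local Notation mu := (@lebesgue_measure R).
Variable g : R -> R.
Hypotheses (g_meas : measurable_fun setT g) (g_ge0 : forall y, 0 <= g y)
  (g_int1 : (\int[mu]_(y in setT) (g y)%:E = 1)%E).

Lemma integrable_density (D : set R) : measurable D -> mu.-integrable D (EFin \o g).
Proof.
move=> mD; apply: (integrableS measurableT) => //; apply/integrableP; split.
  exact/measurable_realfun.measurable_EFinP.
under eq_integral => y _ do rewrite gee0_abs ?lee_fin //.
by rewrite g_int1 ltry.
Qed.

Lemma integral_itvoy_density (x G : R) :
  (G%:E = \int[mu]_(t in `]-oo, x]) (g t)%:E)%E ->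
  (\int[mu]_(y in `]x, +oo[) (g y)%:E = (1 - G)%:E)%E.
Proof.
move=> GE; move: g_int1.
rewrite -(setUv `]-oo, x]) ge0_integral_setU //; last 4 first.
- exact: measurableC.
- exact/measurable_realfun.measurable_EFinP/measurable_funTS.
- by move=> y _; rewrite lee_fin.
- exact/disj_setPCl.
rewrite -GE setCitvl.
case: (\int[mu]_(y in _) (g y)%:E)%E => [r||] //= /eqP.
by rewrite -EFinD eqe => /eqP <-; congr EFin; ring.
Qed.

End density.

Lemma is_derive_cvg_left_quotient (R : realType) (g : R -> R) (a d : R) :
  is_derive a 1 g d -> (fun h => (g a - g (a + h)) / h) @ 0^'- --> - d.
Proof.
case=> g_der <-; apply: cvg_dnbhs_at_left.
apply: cvg_trans (cvgN g_der); apply: near_eq_cvg; near=> h => /=.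
change (- (h^-1 * (g (h * 1 + a) - g a)) = (g a - g (a + h)) / h).
by rewrite mulr1 (addrC h) mulrC -mulNr opprB.
Unshelve. all: by end_near.
Qed.

Lemma ereal_sup_div_le0 (R : realType) (S : set R) (g h : R -> R) :
  (forall y, S y -> 0 < h y) ->
  (ereal_sup [set (g y / h y)%:E | y in S] <= 0)%E -> forall y, S y -> g y <= 0.
Proof.
move=> h_gt0 sup_le0 y Sy.
have : ((g y / h y)%:E <= 0)%E.
  by apply: le_trans sup_le0; apply: ereal_sup_ubound; exists y.
by rewrite lee_fin pmulr_lle0 // invr_gt0 h_gt0.
Qed.

Lemma supp_int_nonempty (R : realType) (xbar : \bar R) (L : R -> R) (a : R) :
  ((L a)%:E < xbar)%E -> exists x, x \in supp_int xbar L a.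
Proof.
case: xbar => [r| |] //= La_lt.
- by exists r; rewrite inE; split => //; rewrite -lte_fin.
- by exists (L a + 1); rewrite inE; split; [rewrite ltrDl | rewrite leey].
Qed.

Section tail_indicator.
Variables (R : realType) (xbar : \bar R) (L : R -> R) (f F Fa : R -> R -> R).
Local Notation mu := (@lebesgue_measure R).
Hypotheses
  (f_meas : forall b, 0 <= b -> measurable_fun setT (fun y => f y b))
  (f_ge0 : forall b y, 0 <= b -> 0 <= f y b)
  (f_out : forall b y, 0 <= b -> ~ (L b <= y /\ (y%:E <= xbar)%E) -> f y b = 0)
  (f_int1 : forall b, 0 <= b -> (\int[mu]_(y in setT) (f y b)%:E = 1)%E)
  (F_cdf : forall b y, 0 <= b ->
     (F y b)%:E = (\int[mu]_(t in `]-oo, y]) (f t b)%:E)%E).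
Variables a x : R.
Hypotheses (a_gt0 : 0 < a) (x_supp : x \in supp_int xbar L a).
Local Notation s := (\1_`]x, +oo[ : R -> R).

Lemma density_tail_out b y : 0 <= b -> x < y -> ~ supp_int xbar L a y -> f y b = 0.
Proof.
move=> b0 xy y_out; apply: f_out => // -[_ y_le]; apply: y_out; split => //.
by move: x_supp; rewrite inE => -[La_x _]; exact: lt_trans xy.
Qed.

Lemma tail_mass b : 0 <= b ->
  (\int[mu]_(y in `]x, +oo[) (f y b)%:E = (1 - F x b)%:E)%E.
Proof.
move=> b0; have := integral_itvoy_density (f_meas b0) _ (f_int1 b0) (F_cdf x b0).
by apply=> y; exact: f_ge0.
Qed.

Lemma integral_supp_indic_density_lt_oo :
  (\int[mu]_(y in supp_int xbar L a) (s y * f y a)%:E < +oo)%E.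
Proof.
under eq_integral => y _ do rewrite mulrC.
rewrite integral_mulr_indic ?tail_mass ?ltry ?ltW // => y.
by rewrite /= in_itv /= andbT; apply: density_tail_out; exact: ltW.
Qed.

Lemma integral_supp_quotient_indic h : 0 <= a + h -> h != 0 ->
  (\int[mu]_(y in supp_int xbar L a) (((f y (a + h) - f y a) / h) * s y)%:E =
   ((F x a - F x (a + h)) / h)%:E)%E.
Proof.
move=> ah_ge0 h_neq0; rewrite integral_mulr_indic; last first.
  move=> y; rewrite /= in_itv /= andbT => xy y_out.
  rewrite (density_tail_out ah_ge0 xy y_out).
  by rewrite (density_tail_out (ltW a_gt0) xy y_out) subrr mul0r.
have f_int b : 0 <= b -> mu.-integrable `]x, +oo[ (EFin \o f^~ b).
  move=> b0; have := integrable_density (f_meas b0) _ (f_int1 b0) (measurable_itv _).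
  by apply=> y; exact: f_ge0.
under eq_integral => y _ do rewrite EFinM EFinB.
rewrite integralZr; last by apply: integrableB => //; apply: f_int => //; exact: ltW.
rewrite integralB_EFin ?f_int ?(ltW a_gt0) // !tail_mass ?(ltW a_gt0) //.
- by rewrite -EFinB -EFinM; congr EFin; ring.
- exact: measurable_itv.
Qed.

Lemma integral_supp_quotient_indic_cvg : is_derive a 1 (F x) (Fa x a) ->
  (\int[mu]_(y in supp_int xbar L a) (((f y (a + h) - f y a) / h) * s y)%:E)%E
    @[h --> 0^'-] --> (- Fa x a)%:E.
Proof.
move=> F_der.
have quotient_cvg : ((F x a - F x (a + h)) / h)%:E @[h --> 0^'-] --> (- Fa x a)%:E.
  by apply: cvg_EFin; [near=> h | exact: is_derive_cvg_left_quotient].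
apply: cvg_trans quotient_cvg; apply: near_eq_cvg; near=> h.
apply/esym/integral_supp_quotient_indic.
- have : - a < h by near: h; apply: nbhs_left_gt; rewrite ltrNl oppr0.
  by move=> ha; rewrite -lerBlDl sub0r ltW.
- by apply: ltr0_neq0; near: h; exact: nbhs_left_lt.
Unshelve. all: by end_near.
Qed.

End tail_indicator.

Theorem lemmaA1 (R : realType) (xbar : \bar R) (L : R -> R)
    (f F fa Fa : R -> R -> R) :
  pa_model xbar L f F fa Fa ->
  forall a : R, 0 < a ->
  (0 < ereal_sup [set (fa x a / f x a)%:E | x in supp_int xbar L a])%E.
Proof.
move=> [_ [L_lt_xbar [_ [_ [_ [f_meas [f_ge0 [f_out [f_pos [f_int1 [F_cdf
  [f_F_der [_ [Fa_lt0 fa_swap]]]]]]]]]]]]]] a a_gt0.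
have [x x_supp] := supp_int_nonempty (L_lt_xbar a (ltW a_gt0)).2.
set s : R -> R := \1_`]x, +oo[.
have s_ge0 y : 0 <= s y by rewrite /s indicE.
have s_meas : measurable_fun (supp_int xbar L a) s.
  exact: measurable_realfun.measurable_indic.
have s_fin :=
  integral_supp_indic_density_lt_oo f_meas f_ge0 f_out f_int1 F_cdf a_gt0 x_supp.
have quotient_cvg := integral_supp_quotient_indic_cvg f_meas f_ge0 f_out f_int1
  F_cdf a_gt0 x_supp (f_F_der a x a_gt0 x_supp).2.
have fa_s := cvg_unique (@ereal_hausdorff R)
  (fa_swap a a_gt0 s s_ge0 s_meas s_fin) quotient_cvg.
rewrite ltNge; apply/negP => /ereal_sup_div_le0 fa_le0.
have : (\int[lebesgue_measure]_(y in supp_int xbar L a) (fa y a * s y)%:E <= 0)%E.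
  apply: integral_le0 => y y_supp; rewrite lee_fin mulr_le0_ge0 // fa_le0 // => z z_supp.
  by apply: f_pos (ltW a_gt0) _; rewrite inE.
by rewrite fa_s lee_fin oppr_le0 leNgt Fa_lt0.
Qed.
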